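(* Let $n\ge1$, $m\ge1$ be integers, $q=\exp\bigl(\tfrac{2\pi i}{m+n+1}\bigr)$, and consider $$\partial^{n+1}y+(-1)^n\,(x^m+\lambda^{n+1})\,y=0,\qquad \partial=\tfrac{d}{dx},\ \lambda\in\mathbb{C}.$$ Let $y(x,\lambda)$ be a solution of this equation for each $\lambda$ (in the paper: the solution subdominant as $x\to\infty$ in the sector $|\arg x|\le\pi/(m+n+1)$), set $y_k(x,\lambda)=q^{nk/2}\,y(xq^{-k},\lambda q^k)$ for $k\in\mathbb{Z}$ (each is again a solution), and assume that for every $k$ the functions $y_k,y_{k+1},\dots,y_{k+n}$ are linearly independent. Let $\Phi_k$ be the $(n+1)\times(n+1)$ matrix whose $(i+1,j+1)$ entry is $\partial^i y_{k+j}$ ($0\le i,j\le n$), and for $\ell\ge1$ let $S^{(\ell)}_k$ be the constant matrix with $\Phi_k=\Phi_{k+\ell}S^{(\ell)}_k$; write $S^{(\ell)}(\lambda)$ for $S^{(\ell)}_0$ regarded as a function of $\lambda$, so that $S^{(\ell)}_k=S^{(\ell)}(\lambda q^k)$, and let $S^{(\ell)}_{i,j}(\lambda)$ denote its entries. Define $T^{(1)}_\ell(\lambda)=S^{(\ell)}_{1,1}(\lambda q^{-(\ell-1)/2})$ for $\ell\ge1$, $T^{(1)}_0=1$, $T^{(1)}_\ell=0$ for $\ell<0$. For a Young diagram $\mu=(\mu_1,\mu_2,\dots)$ with transpose $\mu'$ define $$T_\mu(\lambda)=\det_{1\le i,j\le\mu'_1}\Bigl(T^{(1)}_{\mu_i-i+j}\bigl(\lambda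 q^{-(\mu'_1-\mu_1+\mu_i-i-j+1)/2}\bigr)\Bigr).$$ Then for every $\ell\ge1$ and every $1\le k\le n+1$, $$S^{(\ell)}_{k,1}(\lambda)=(-1)^{k+1}\,T_\mu\bigl(q^{(\ell+k-2)/2}\lambda\bigr),$$ where $\mu=(\ell,1,\dots,1)$ is the hook-shaped Young diagram of first row length $\ell$ and height $k$.
   Context: Fractional powers $q^{s}$ mean $\exp\bigl(\tfrac{2\pi i s}{m+n+1}\bigr)$. The Stokes matrix $S^{(1)}_k$ connects the fundamental systems $\Phi_k$ and $\Phi_{k+1}$; the generalized Stokes matrix $S^{(\ell)}_k$ connects $\Phi_k$ and $\Phi_{k+\ell}$. *)

From HB Require Import structures.
From mathcomp Require Import all_boot all_algebra.
From mathcomp Require Import all_classical all_reals all_analysis.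
From mathcomp Require Import complex.
Import GRing.Theory Num.Theory.
Import numFieldNormedType.Exports.
Set Implicit Arguments. Unset Strict Implicit. Unset Printing Implicit Defensive.
Local Open Scope ring_scope.

Definition Cx (R : realType) : numFieldType := R[i].

Definition qpow (R : realType) (m n : nat) (s : R) : Cx R :=
  let th := 2 * pi * s / (m + n + 1)%:R in Complex (cos th) (sin th).

Definition yk (R : realType) (m n : nat) (y : Cx R -> Cx R -> Cx R)
  (k : int) (x lam : Cx R) : Cx R :=
  @qpow R m n (n%:R * k%:~R / 2) * y (x * @qpow R m n (- k%:~R)) (lam * @qpow R m n k%:~R).

Definition Phi (R : realType) (m n : nat) (y : Cx R -> Cx R -> Cx R)
  (k : int) (x lam : Cx R) : 'M[Cx R]_(n.+1) :=
  \matrix_(i < n.+1, j < n.+1)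
     derive1n i (fun z : Cx R => @yk R m n y (k + j%:Z) z lam) x.

(* T^{(1)}_l(lam) = S^{(l)}_{1,1}(lam q^{-(l-1)/2}) for l >= 1, 1 for l = 0,
   0 for l < 0.  S l lam is the matrix S^{(l)}(lam) (0-based entries). *)
Definition T1 (R : realType) (m n : nat) (S : nat -> Cx R -> 'M[Cx R]_(n.+1))
  (l : int) (lam : Cx R) : Cx R :=
  match l with
  | Posz p.+1 => S p.+1 (lam * @qpow R m n (- (p%:R) / 2)) ord0 ord0
  | Posz 0 => 1
  | Negz _ => 0
  end.

(* T_mu for a Young diagram mu given by its list of (positive) row lengths
   mu_1 >= mu_2 >= ... ; mu'_1 = size mu.  With 1-based i = i0+1, j = j0+1:
   T_mu(lam) = det ( T^{(1)}_{mu_i - i + j}(lam q^{-(mu'_1 - mu_1 + mu_i - i - j + 1)/2}) ). *)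
Definition Tmu (R : realType) (m n : nat) (S : nat -> Cx R -> 'M[Cx R]_(n.+1))
  (mu : seq nat) (lam : Cx R) : Cx R :=
  \det (\matrix_(i < size mu, j < size mu)
     @T1 R m n S ((nth 0%N mu i)%:Z - (i.+1)%:Z + (j.+1)%:Z)
        (lam * @qpow R m n (- (((size mu)%:Z - (nth 0%N mu 0)%:Z + (nth 0%N mu i)%:Z
                              - (i.+1)%:Z - (j.+1)%:Z + 1)%:~R) / 2))).

From HB Require Import structures.
From mathcomp Require Import all_boot all_algebra.
From mathcomp Require Import all_classical all_reals all_analysis.
From mathcomp Require Import complex.
Import GRing.Theory Num.Theory.
Import numFieldNormedType.Exports.
Local Open Scope ring_scope.
From mathcomp Require Import ring lra zify.

Set Implicit Arguments.
Unset Strict Implicit.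
Unset Printing Implicit Defensive.

(* Only the first row of [Phi_0 = Phi_t S^(t)] is needed; after the twist by
   [q^p] it reads [y_p = sum_i S^(t)(lam q^p)_(i,1) y_(p+t+i)].  Expanding [y_0]
   in the basis [y_(l+j), ..., y_(l+j+n)] both directly and through
   [y_l, ..., y_(l+n)], linear independence gives
   [S^(l+j)_(1,1)(lam) = sum_p S^(l)_(p,1)(lam) S^(j-p)_(1,1)(lam q^(l+p))],
   where [S^(0)_(1,1) = 1] and [S^(t)_(1,1) = 0] for [t < 0].  For the hook
   [(l, 1, ..., 1)] of height [k+1] this says that the first row of the matrix
   defining [T_mu] is a combination of the other rows plus [S^(l)_(k+1,1)] times
   the last unit row, while the other rows form an upper unitriangular block;
   hence the determinant is [(-1)^k S^(l)_(k+1,1)]. *)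

Section HookDeterminant.
Variable C : comNzRingType.

Lemma expand_cofactor_row_neq n (A : 'M[C]_n) (i r : 'I_n) :
  i != r -> \sum_j A i j * cofactor A r j = 0.
Proof.
move=> /negbTE ir; have := congr1 (fun B : 'M[C]_n => B i r) (mul_mx_adj A).
rewrite !mxE ir mulr0n => adj_ir; rewrite -[RHS]adj_ir.
by apply: eq_bigr => j _; rewrite mxE.
Qed.

Lemma det_upper_unitrig n (A : 'M[C]_n) :
  (forall i j : 'I_n, (j < i)%N -> A i j = 0) -> (forall i, A i i = 1) ->
  \det A = 1.
Proof.
move=> A_upper A_diag; rewrite -det_tr det_trig.
  by rewrite big1 // => i _; rewrite mxE A_diag.
by apply/is_trig_mxP => i j ij; rewrite mxE A_upper.
Qed.

Lemma det_hook K (F : nat -> nat -> C) (c : nat -> C) :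
  (forall i j, (j < i)%N -> F i.+1 j = 0) -> (forall i, F i.+1 i = 1) ->
  (forall j, (j <= K)%N -> F 0%N j = \sum_(p < K.+1) c p * F p.+1 j) ->
  \det (\matrix_(i < K.+1, j < K.+1) F i j) = (-1) ^+ K * c K.
Proof.
move=> F_upper F_diag F_row0; set M := \matrix_(i, j) F i j.
have row0E (j : 'I_K.+1) :
    M ord0 j = \sum_(p < K) c p * M (lift ord0 p) j + c K * (j == ord_max)%:R.
  rewrite !mxE F_row0; last exact: ltn_ord j.
  rewrite big_ord_recr /=; congr (_ + c K * _).
    by apply: eq_bigr => p _; rewrite !mxE lift0.
  have [->|jK] := eqVneq j ord_max; first by rewrite F_diag.
  by rewrite F_upper // ltn_neqAle jK -ltnS ltn_ord.
have minor1 : \det (row' ord0 (col' ord_max M)) = 1.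
  apply: det_upper_unitrig => [i j ji|i]; rewrite !mxE (lift0 i).
    by rewrite (lift_max j) F_upper.
  by rewrite (lift_max i) F_diag.
rewrite (expand_det_row M ord0); under eq_bigr do rewrite row0E mulrDl mulr_suml.
rewrite big_split /= exchange_big big1 => [|p _]; last first.
  under eq_bigr do rewrite -mulrA.
  by rewrite -mulr_sumr expand_cofactor_row_neq ?mulr0.
rewrite add0r (bigD1 ord_max) //= big1 => [|j /negbTE->]; last by rewrite mulr0 mul0r.
by rewrite eqxx mulr1 addr0 /cofactor minor1 mulr1 add0n mulrC.
Qed.

End HookDeterminant.

Lemma qpowD (R : realType) m n (a b : R) : qpow m n a * qpow m n b = qpow m n (a + b).
Proof.
rewrite /qpow; set N := (m + n + 1)%:R.
rewrite (_ : 2 * pi * (a + b) / N = 2 * pi * a / N + 2 * pi * b / N) ?cosD ?sinD.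
  by congr Complex; ring.
by rewrite -mulrDl mulrDr.
Qed.

Lemma qpow0 (R : realType) m n : qpow m n (0 : R) = 1.
Proof. by rewrite /qpow !mulr0 mul0r cos0 sin0. Qed.

Lemma mul_qpowA (R : realType) m n (z : Cx R) (a b : R) :
  z * qpow m n a * qpow m n b = z * qpow m n (a + b).
Proof. by rewrite -mulrA qpowD. Qed.

Section StokesRelations.
Variables (R : realType) (m n : nat) (y : Cx R -> Cx R -> Cx R).
Variable S : nat -> Cx R -> 'M[Cx R]_(n.+1).
Local Notation q := (@qpow R m n).
Local Notation Y := (@yk R m n y).

Lemma yk_shift (a p : int) (x lam : Cx R) :
  Y a (x * q (- p%:~R)) (lam * q p%:~R) = q (- (n%:R * p%:~R / 2)) * Y (a + p) x lam.
Proof.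
rewrite /yk !mul_qpowA mulrA qpowD.
by congr (q _ * y (x * q _) (lam * q _)); rewrite intrD; ring.
Qed.

Hypothesis Phi_stokes : forall l : nat, (1 <= l)%N -> forall lam x : Cx R,
  @Phi R m n y 0 x lam = @Phi R m n y l%:Z x lam *m S l lam.

Lemma yk_stokes (t : nat) (p : int) (lam x : Cx R) : (1 <= t)%N ->
  Y p x lam = \sum_(i < n.+1) S t (lam * q p%:~R) i ord0 * Y (p + t%:Z + i%:Z) x lam.
Proof.
move=> t_gt0.
have := congr1 (fun M : 'M[Cx R]_(n.+1) => M ord0 ord0)
  (@Phi_stokes t t_gt0 (lam * q p%:~R) (x * q (- p%:~R))).
rewrite /Phi !mxE /=; under eq_bigr do rewrite !mxE /=.
rewrite add0r yk_shift; under eq_bigr do rewrite yk_shift.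
move/(congr1 (fun z => q (n%:R * p%:~R / 2) * z)).
rewrite mulrA qpowD addrN qpow0 mul1r add0r => ->.
rewrite mulr_sumr; apply: eq_bigr => i _.
rewrite (_ : p + t%:Z + i%:Z = t%:Z + i%:Z + p); last by ring.
by rewrite mulrA (mulrA (q _)) qpowD addrN qpow0 mul1r mulrC.
Qed.

Lemma yk0_stokes (t : nat) (lam x : Cx R) : (1 <= t)%N ->
  Y 0 x lam = \sum_(i < n.+1) S t lam i ord0 * Y (t%:Z + i%:Z) x lam.
Proof.
move=> t_gt0; rewrite (@yk_stokes t 0 lam x t_gt0) mulr0z qpow0 mulr1.
by under eq_bigr do rewrite add0r.
Qed.

Hypothesis yk_free : forall (k : int) (lam : Cx R) (c : 'I_n.+1 -> Cx R),
  (forall x : Cx R, \sum_(j < n.+1) c j * Y (k + j%:Z) x lam = 0) ->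
  forall j, c j = 0.

Lemma yk_coord_unique (k : int) (lam : Cx R) (c d : 'I_n.+1 -> Cx R) :
  (forall x, \sum_j c j * Y (k + j%:Z) x lam = \sum_j d j * Y (k + j%:Z) x lam) ->
  c =1 d.
Proof.
move=> cd j; apply/eqP; rewrite -subr_eq0; apply/eqP.
apply: (@yk_free k lam (fun j => c j - d j)) => x.
by under eq_bigr do rewrite mulrBl; rewrite sumrB cd subrr.
Qed.

Definition yk_coord (lam : Cx R) (b a : nat) (r : 'I_n.+1) : Cx R :=
  if (b < a)%N then S (a - b)%N (lam * q b%:R) r ord0 else ((r : nat) == (b - a)%N)%:R.

Lemma yk_coordE (lam x : Cx R) (b a : nat) : (b <= a + n)%N ->
  \sum_r yk_coord lam b a r * Y (a%:Z + r%:Z) x lam = Y b x lam.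
Proof.
rewrite /yk_coord; case: ltnP => [ba _|ab ban].
  rewrite (@yk_stokes (a - b)) ?subn_gt0 //; apply: eq_bigr => r _.
  by rewrite -!PoszD subnKC ?(ltnW ba).
have r_lt : (b - a < n.+1)%N by lia.
rewrite (bigD1 (Ordinal r_lt)) //= eqxx mul1r big1 ?addr0 => [|r r_neq].
  by rewrite -PoszD subnKC.
by rewrite (_ : (r : nat) == (b - a)%N = false) ?mul0r //; exact: negbTE r_neq.
Qed.

Lemma S_addn_col0 (l j : nat) (lam : Cx R) (r : 'I_n.+1) : (1 <= l)%N -> (j <= n)%N ->
  S (l + j) lam r ord0 = \sum_(p < n.+1) S l lam p ord0 * yk_coord lam (l + p) (l + j) r.
Proof.
move=> l_gt0 jn; move: r; apply: (@yk_coord_unique (l + j)%N lam) => x.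
rewrite -yk0_stokes ?addn_gt0 ?l_gt0 // (yk0_stokes (t := l)) //.
under [RHS]eq_bigr do rewrite mulr_suml.
rewrite [RHS]exchange_big /=; apply: eq_bigr => p _.
rewrite -PoszD -(@yk_coordE lam x _ (l + j)); last by have := ltn_ord p; lia.
by rewrite mulr_sumr; apply: eq_bigr => i _; rewrite mulrA.
Qed.

Definition S11 (t : int) (mu : Cx R) : Cx R :=
  match t with Posz p.+1 => S p.+1 mu ord0 ord0 | Posz 0 => 1 | Negz _ => 0 end.

Lemma S11_pos (t : nat) (mu : Cx R) : (0 < t)%N -> S11 t mu = S t mu ord0 ord0.
Proof. by case: t. Qed.

Lemma S11_subz_gt (j p : nat) (mu : Cx R) : (j < p)%N -> S11 (j%:Z - p%:Z) mu = 0.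
Proof. by move=> jp; rewrite (_ : j%:Z - p%:Z = Negz (p - j.+1)) // NegzE; lia. Qed.

Lemma T1_S11 (t : int) (mu : Cx R) : T1 m S t mu = S11 t (mu * q (- (t - 1)%:~R / 2)).
Proof.
case: t => [[|p]|p] //=; congr (S _ (_ * q _) _ _).
by rewrite (_ : p.+1%:Z - 1 = p) //; lia.
Qed.

Lemma yk_coord0 (lam : Cx R) (l p j : nat) :
  yk_coord lam (l + p) (l + j) ord0 = S11 (j%:Z - p%:Z) (lam * q (l + p)%:R).
Proof.
rewrite /yk_coord ltn_add2l subnDl subnDl.
case: ltnP => [pj|jp].
  rewrite subzn ?(ltnW pj) //; case E: (j - p)%N => [|s] //; lia.
have [->|pj] := eqVneq p j; first by rewrite subnn subrr.
rewrite S11_subz_gt; last by rewrite ltn_neqAle eq_sym pj.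
by rewrite (_ : 0%N == (p - j)%N = false) //; apply/negbTE; lia.
Qed.

Lemma S_addn_hook (l j k : nat) (lam : Cx R) : (1 <= l)%N -> (j <= k)%N -> (k <= n)%N ->
  S (l + j) lam ord0 ord0 =
  \sum_(p < k.+1) S l lam (inord p) ord0 * S11 (j%:Z - p%:Z) (lam * q (l + p)%:R).
Proof.
move=> l_gt0 jk kn; rewrite S_addn_col0 //; last exact: leq_trans kn.
rewrite (big_ord_widen n.+1
  (fun p : nat => S l lam (inord p) ord0 * S11 (j%:Z - p%:Z) (lam * q (l + p)%:R)))
  // [RHS]big_mkcond /=.
apply: eq_bigr => p _; rewrite yk_coord0 inord_val; case: ifPn => //.
rewrite -leqNgt => kp; rewrite S11_subz_gt ?mulr0 //; exact: leq_ltn_trans jk kp.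
Qed.

Definition hook_entry (l : nat) (lam : Cx R) (i j : nat) : Cx R :=
  if i is p.+1 then S11 (j%:Z - p%:Z) (lam * q (l + p)%:R) else S (l + j) lam ord0 ord0.

Lemma Tmu_hook (l k : nat) (lam : Cx R) : (1 <= l)%N ->
  Tmu m S (l :: nseq k 1%N) (q ((l%:R + k.+1%:R - 2) / 2) * lam) =
  \det (\matrix_(i < (size (nseq k 1%N)).+1, j < _) hook_entry l lam i j).
Proof.
move=> l_gt0; congr (\det _); apply/matrixP => i j.
rewrite !mxE T1_S11 [q _ * lam]mulrC !mul_qpowA.
move: (nat_of_ord i) (ltn_ord i) (nat_of_ord j) => {}i + {}j.
have -> : size (l :: nseq k 1%N) = k.+1 by rewrite /= size_nseq.
case: i => [_|p] /=; last rewrite ltnS => p_lt.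
  rewrite (_ : l%:Z - 1 + j.+1%:Z = (l + j)%N); last by lia.
  rewrite S11_pos ?addn_gt0 ?l_gt0 //; congr (S _ _ _ _).
  by rewrite -[RHS]mulr1 -(qpow0 R m n); congr (_ * q _); lra.
rewrite nth_nseq p_lt (_ : 1%:Z - p.+2%:Z + j.+1%:Z = j%:Z - p%:Z); last by lia.
by congr (S11 _ (lam * q _)); rewrite natrD; lra.
Qed.

End StokesRelations.

Theorem theorem3 (R : realType) (n m : nat) (hn : (1 <= n)%N) (hm : (1 <= m)%N)
  (y : Cx R -> Cx R -> Cx R) (S : nat -> Cx R -> 'M[Cx R]_(n.+1)) :
  (* for each lam, x |-> y(x,lam) is (n+1) times complex-differentiable *)
  (forall (lam : Cx R) (i : nat), (i <= n)%N ->
     forall x : Cx R, derivable (derive1n i (fun z : Cx R => y z lam)) x 1) ->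
  (* y(., lam) solves  d^{n+1} y + (-1)^n (x^m + lam^{n+1}) y = 0 *)
  (forall lam x : Cx R,
     derive1n n.+1 (fun z : Cx R => y z lam) x
       + (-1) ^+ n * (x ^+ m + lam ^+ n.+1) * y x lam = 0) ->
  (* for every k, y_k, ..., y_{k+n} are linearly independent *)
  (forall (k : int) (lam : Cx R) (c : 'I_n.+1 -> Cx R),
     (forall x : Cx R, \sum_(j < n.+1) c j * @yk R m n y (k + j%:Z) x lam = 0) ->
     forall j, c j = 0) ->
  (* S l lam = S^{(l)}(lam) : Phi_0 = Phi_l S^{(l)} *)
  (forall l : nat, (1 <= l)%N -> forall lam x : Cx R,
     @Phi R m n y 0 x lam = @Phi R m n y l%:Z x lam *m S l lam) ->
  forall (l : nat), (1 <= l)%N -> forall (k : 'I_n.+1) (lam : Cx R),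
    (* k is 0-based: paper's k is k.+1; hook mu = (l, 1, ..., 1) of height k.+1 *)
    S l lam k ord0 =
      (-1) ^+ (k.+1 + 1) *
      @Tmu R m n S (l :: nseq k 1%N)
        (@qpow R m n ((l%:R + (k.+1)%:R - 2) / 2) * lam).
Proof.
move=> _ _ yk_free Phi_stokes l l_gt0 k lam.
rewrite Tmu_hook // (det_hook (c := fun p => S l lam (inord p) ord0)).
- rewrite size_nseq inord_val mulrA -exprD.
  by rewrite (_ : (k.+1 + 1 + k = 2 * k.+1)%N) ?exprM ?sqrrN ?expr1n ?mul1r //; lia.
- by move=> i j ji; rewrite /hook_entry S11_subz_gt.
- by move=> i; rewrite /hook_entry subrr.
- move=> j; rewrite size_nseq => jk.
  by rewrite /hook_entry (S_addn_hook Phi_stokes yk_free (k := k)) // -ltnS.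
Qed.
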